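(* Let $\alpha,\beta,\gamma,\delta\in\mathbb{R}$ with $\alpha+\delta\neq 0$ and $\alpha\gamma=0$, and let $G_7$ be the connected, simply connected Lie group whose Lie algebra $\mathfrak{g}_7$ has a basis $\{e_1,e_2,e_3\}$ with $[e_1,e_2]=-\alpha e_1-\beta e_2-\beta e_3$, $[e_1,e_3]=\alpha e_1+\beta e_2+\beta e_3$, $[e_2,e_3]=\gamma e_1+\delta e_2+\delta e_3$, equipped with the left-invariant Lorentzian metric $g$ for which $\{e_1,e_2,e_3\}$ is pseudo-orthonormal with $e_3$ timelike. Let $\lambda_0,c\in\mathbb{R}$. Then there exists a derivation $D$ of $\mathfrak{g}_7$ with $\mathrm{Ric}=(s\lambda_0+c)\mathrm{Id}+D$ (i.e. $(G_7,g)$ is an algebraic Schouten soliton associated to the Levi-Civita connection) if and only if $\gamma=0$ and $c=0$.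
   Context: Pseudo-orthonormal means $g(e_1,e_1)=g(e_2,e_2)=1$, $g(e_3,e_3)=-1$, $g(e_i,e_j)=0$ for $i\neq j$; left-invariant tensors are identified with their values on $\mathfrak{g}$. $\nabla$ is the Levi-Civita connection of $g$, with curvature $R(X,Y)Z=\nabla_X\nabla_YZ-\nabla_Y\nabla_XZ-\nabla_{[X,Y]}Z$. The Ricci tensor is $\rho(X,Y)=-g(R(X,e_1)Y,e_1)-g(R(X,e_2)Y,e_2)+g(R(X,e_3)Y,e_3)$, the Ricci operator $\mathrm{Ric}$ is defined by $\rho(X,Y)=g(\mathrm{Ric}(X),Y)$, and the scalar curvature is $s=\rho(e_1,e_1)+\rho(e_2,e_2)-\rho(e_3,e_3)$. A derivation of $\mathfrak{g}$ is a linear map $D:\mathfrak{g}\to\mathfrak{g}$ with $D[X,Y]=[DX,Y]+[X,DY]$ for all $X,Y\in\mathfrak{g}$. $(G,g)$ is called an algebraic Schouten soliton associated to $\nabla$ (with real constants $\lambda_0$, $c$) if $\mathrm{Ric}=(s\lambda_0+c)\mathrm{Id}+D$ for some derivation $D$. *)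

(* The Lie algebra g7 is modelled as R^3 = 'rV[R]_3 with
   the standard basis e_0, e_1, e_2 (= paper's e1, e2, e3). *)
From HB Require Import structures.
From mathcomp Require Import all_boot all_order all_algebra.
Set Implicit Arguments. Unset Strict Implicit. Unset Printing Implicit Defensive.
Import Order.TTheory GRing.Theory Num.Theory.
Local Open Scope ring_scope.

Section G7.
Variable R : realFieldType.
Variables (alpha beta gamma delta : R).

Definition vec3 (x y z : R) : 'rV[R]_3 := \row_(k < 3) [:: x; y; z]`_k.

Definition e (i : 'I_3) : 'rV[R]_3 := delta_mx 0 i.

Definition bc (i j : 'I_3) : 'rV[R]_3 :=
  match val i, val j with
  | 0, 1 => vec3 (- alpha) (- beta) (- beta)
  | 1, 0 => - vec3 (- alpha) (- beta) (- beta)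
  | 0, 2 => vec3 alpha beta beta
  | 2, 0 => - vec3 alpha beta beta
  | 1, 2 => vec3 gamma delta delta
  | 2, 1 => - vec3 gamma delta delta
  | _, _ => 0
  end.

Definition brk (X Y : 'rV[R]_3) : 'rV[R]_3 :=
  \sum_(i < 3) \sum_(j < 3) (X 0 i * Y 0 j) *: bc i j.

Definition eps (i : 'I_3) : R := if val i == 2 then -1 else 1.

Definition gm (X Y : 'rV[R]_3) : R := \sum_(i < 3) eps i * X 0 i * Y 0 i.

(* Levi-Civita connection on left-invariant fields (Koszul formula):
   2 g(nabla_X Y, Z) = g([X,Y],Z) - g([Y,Z],X) + g([Z,X],Y). *)
Definition nabla (X Y : 'rV[R]_3) : 'rV[R]_3 :=
  \sum_(k < 3)
    (eps k / 2 * (gm (brk X Y) (e k) - gm (brk Y (e k)) X + gm (brk (e k) X) Y))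
      *: e k.

Definition curv (X Y Z : 'rV[R]_3) : 'rV[R]_3 :=
  nabla X (nabla Y Z) - nabla Y (nabla X Z) - nabla (brk X Y) Z.

Definition rho (X Y : 'rV[R]_3) : R :=
  - gm (curv X (e 0) Y) (e 0) - gm (curv X (e 1) Y) (e 1)
  + gm (curv X (e 2) Y) (e 2).

(* Ricci operator: the unique Ric with rho(X,Y) = g(Ric X, Y) *)
Definition Ric (X : 'rV[R]_3) : 'rV[R]_3 :=
  \sum_(k < 3) (eps k * rho X (e k)) *: e k.

Definition scal : R := rho (e 0) (e 0) + rho (e 1) (e 1) - rho (e 2) (e 2).

(* a linear map D : g7 -> g7, represented by its matrix acting on row
   vectors (X |-> X *m D), is a derivation of g7 *)
Definition is_derivation (D : 'M[R]_3) : Prop :=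
  forall X Y : 'rV[R]_3, brk X Y *m D = brk (X *m D) Y + brk X (Y *m D).

Definition algebraic_schouten_soliton (lambda0 c : R) : Prop :=
  exists D : 'M[R]_3, is_derivation D /\
    forall X : 'rV[R]_3, Ric X = (scal * lambda0 + c) *: X + X *m D.

End G7.

(* In coordinates the Levi-Civita connection is [nabla X Y = Y *m N(X)] with a
   matrix N(X) linear in X, so curvature reduces to matrix products and the
   Ricci operator is an explicit matrix, with scalar curvature gamma^2/2.
   If Ric = k Id + D with D a derivation, then Ric - k Id is a derivation.
   When gamma <> 0 we have alpha = 0 and delta <> 0, and the derivation identity
   on (e2, e3) forces both k = 3 gamma^2/2 and k = gamma^2/2, which is absurd.
   When gamma = 0, Ric is itself a derivation, hence so is k Id; as g7 is not
   abelian (alpha + delta <> 0) this gives k = 0, i.e. c = k - s lambda0 = 0. *)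

From mathcomp Require Import all_boot all_order all_algebra.
From mathcomp Require Import ring lra.
Set Implicit Arguments. Unset Strict Implicit.
Import Order.TTheory GRing.Theory Num.Theory.
Local Open Scope ring_scope.

Lemma sum_ord3 (V : nmodType) (F : 'I_3 -> V) : \sum_(i < 3) F i = F 0 + F 1 + F 2.
Proof.
rewrite !big_ord_recl big_ord0 addr0 addrA.
by congr (_ + _ + _); congr F; apply: val_inj.
Qed.

Lemma ord3P (k : 'I_3) : [\/ k = 0, k = 1 | k = 2].
Proof.
by case: k => -[|[|[|//]]] ?; [constructor 1|constructor 2|constructor 3]; apply: val_inj.
Qed.

Section Coordinates.
Variable R : realFieldType.

Lemma row3P (X Y : 'rV[R]_3) :
  X 0 0 = Y 0 0 -> X 0 1 = Y 0 1 -> X 0 2 = Y 0 2 -> X = Y.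
Proof. by move=> ? ? ?; apply/rowP => k; case: (ord3P k) => ->. Qed.

Lemma mulmx3E m n (A : 'M[R]_(m, 3)) (B : 'M[R]_(3, n)) i j :
  (A *m B) i j = A i 0 * B 0 j + A i 1 * B 1 j + A i 2 * B 2 j.
Proof. by rewrite mxE sum_ord3. Qed.

Lemma mxBE m n (A B : 'M[R]_(m, n)) i j : (A - B) i j = A i j - B i j.
Proof. by rewrite !mxE. Qed.

Lemma eE (i j : 'I_3) : e R i 0 j = (i == j)%:R.
Proof. by rewrite mxE eqxx eq_sym. Qed.

Lemma gmE (X Y : 'rV[R]_3) : gm X Y = X 0 0 * Y 0 0 + X 0 1 * Y 0 1 - X 0 2 * Y 0 2.
Proof. by rewrite /gm sum_ord3 /eps /=; ring. Qed.

Lemma gm_e (X : 'rV[R]_3) (i : 'I_3) : gm X (e R i) = eps R i * X 0 i.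
Proof. by rewrite gmE !eE /eps; case: (ord3P i) => -> /=; ring. Qed.

End Coordinates.

Section G7.
Variables (R : realFieldType) (alpha beta gamma delta : R).
Local Notation e := (e R).
Local Notation eps := (eps R).
Local Notation brk := (brk alpha beta gamma delta).
Local Notation nabla := (nabla alpha beta gamma delta).
Local Notation curv := (curv alpha beta gamma delta).
Local Notation rho := (rho alpha beta gamma delta).
Local Notation Ric := (Ric alpha beta gamma delta).
Local Notation scal := (scal alpha beta gamma delta).
Local Notation is_derivation := (is_derivation alpha beta gamma delta).

Lemma brkE (X Y : 'rV[R]_3) :
  let m := X 0 1 * Y 0 2 - X 0 2 * Y 0 1 in
  let n := X 0 1 * Y 0 0 - X 0 0 * Y 0 1 + X 0 0 * Y 0 2 - X 0 2 * Y 0 0 in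
  brk X Y = vec3 (alpha * n + gamma * m) (beta * n + delta * m) (beta * n + delta * m).
Proof. by rewrite /brk !sum_ord3 /bc /=; apply/row3P; rewrite !mxE /=; ring. Qed.

Lemma brk_e01 : brk (e 0) (e 1) = vec3 (- alpha) (- beta) (- beta).
Proof. by rewrite brkE; apply/row3P; rewrite !mxE /=; ring. Qed.

Lemma brk_e12 : brk (e 1) (e 2) = vec3 gamma delta delta.
Proof. by rewrite brkE; apply/row3P; rewrite !mxE /=; ring. Qed.

Lemma brkBl (X Y Z : 'rV[R]_3) : brk (X - Y) Z = brk X Z - brk Y Z.
Proof. by rewrite !brkE; apply/row3P; rewrite !mxE /=; ring. Qed.

Lemma brkBr (X Y Z : 'rV[R]_3) : brk X (Y - Z) = brk X Y - brk X Z.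
Proof. by rewrite !brkE; apply/row3P; rewrite !mxE /=; ring. Qed.

Lemma brkZl (a : R) (X Y : 'rV[R]_3) : brk (a *: X) Y = a *: brk X Y.
Proof. by rewrite !brkE; apply/row3P; rewrite !mxE /=; ring. Qed.

Lemma brkZr (a : R) (X Y : 'rV[R]_3) : brk X (a *: Y) = a *: brk X Y.
Proof. by rewrite !brkE; apply/row3P; rewrite !mxE /=; ring. Qed.

Definition nabla_mx (X : 'rV[R]_3) : 'M[R]_3 :=
  \matrix_(j < 3)
  [:: vec3 0 (alpha * X 0 0 + beta * (X 0 1 - X 0 2) + gamma / 2 * X 0 2)
             (alpha * X 0 0 + beta * (X 0 1 - X 0 2) + gamma / 2 * X 0 1);
      vec3 (- (alpha * X 0 0 + beta * (X 0 1 - X 0 2)) - gamma / 2 * X 0 2) 0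
           (delta * (X 0 1 - X 0 2) + gamma / 2 * X 0 0);
      vec3 (alpha * X 0 0 + beta * (X 0 1 - X 0 2) + gamma / 2 * X 0 1)
           (delta * (X 0 1 - X 0 2) + gamma / 2 * X 0 0) 0]`_j.

Lemma nabla_mxP (X Y : 'rV[R]_3) : nabla X Y = Y *m nabla_mx X.
Proof.
rewrite /nabla sum_ord3 !gmE !brkE !eE /eps /=.
by apply/row3P; rewrite !mulmx3E !mxE /=; field.
Qed.

(* Row vectors reverse composition: [nabla X (nabla Y Z) = Z *m N(Y) *m N(X)]. *)
Definition curv_mx (X Y : 'rV[R]_3) : 'M[R]_3 :=
  nabla_mx Y *m nabla_mx X - nabla_mx X *m nabla_mx Y - nabla_mx (brk X Y).

Lemma curv_mxP (X Y Z : 'rV[R]_3) : curv X Y Z = Z *m curv_mx X Y.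
Proof. by rewrite /curv !nabla_mxP /curv_mx !mulmxBr !mulmxA. Qed.

Lemma rho_trace (X Y : 'rV[R]_3) : rho X Y = - \sum_(i < 3) curv X (e i) Y 0 i.
Proof. by rewrite /rho !gm_e sum_ord3 /eps /= !mul1r mulN1r !opprD. Qed.

Definition ricci_mx : 'M[R]_3 := \matrix_(i < 3)
  [:: vec3 (- gamma ^+ 2 / 2) (alpha * gamma) (alpha * gamma);
      vec3 (alpha * gamma) (gamma ^+ 2 / 2 - beta * gamma + alpha * delta - alpha ^+ 2)
                           (- beta * gamma + alpha * delta - alpha ^+ 2);
      vec3 (- alpha * gamma) (beta * gamma - alpha * delta + alpha ^+ 2)
                             (gamma ^+ 2 / 2 + beta * gamma - alpha * delta + alpha ^+ 2)]`_i.

Lemma rho_e (X : 'rV[R]_3) (k : 'I_3) : rho X (e k) = eps k * (X *m ricci_mx) 0 k.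
Proof.
have curv_e Y i : curv X Y (e k) 0 i = curv_mx X Y k i by rewrite curv_mxP -rowE mxE.
rewrite rho_trace sum_ord3 !curv_e /curv_mx !brkE !mxBE !mulmx3E.
by case: (ord3P k) => ->; rewrite !mxE /eps /=; field.
Qed.

Lemma RicE (X : 'rV[R]_3) : Ric X = X *m ricci_mx.
Proof.
rewrite /Ric sum_ord3 !rho_e /eps /=.
by apply/row3P; rewrite !mxE /=; ring.
Qed.

Lemma scalE : scal = gamma ^+ 2 / 2.
Proof. by rewrite /scal !rho_e !mulmx3E !mxE /eps /=; field. Qed.

Lemma is_derivation_ricci : gamma = 0 -> is_derivation ricci_mx.
Proof.
move=> gamma0 X Y; rewrite !brkE.
by apply/row3P; rewrite !mulmx3E !mxE /= gamma0; field.
Qed.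

Lemma derivationB (D1 D2 : 'M[R]_3) :
  is_derivation D1 -> is_derivation D2 -> is_derivation (D1 - D2).
Proof.
move=> dD1 dD2 X Y.
by rewrite !mulmxBr dD1 dD2 brkBl brkBr opprD addrACA.
Qed.

Lemma scalar_derivation_eq0 (k : R) :
  alpha + delta != 0 -> is_derivation k%:M -> k = 0.
Proof.
move=> ad_neq0 dk.
have kbrk X Y : k *: brk X Y = 0.
  have := dk X Y; rewrite !mul_mx_scalar brkZl brkZr => /(congr1 (fun v => v - k *: brk X Y)).
  by rewrite subrr addrK => <-.
have /rowP/(_ 0) := kbrk (e 0) (e 1).
have /rowP/(_ 1) := kbrk (e 1) (e 2).
rewrite brk_e01 brk_e12 !mxE /= => kdelta kalpha.
apply: (mulIf ad_neq0); rewrite mul0r mulrDr kdelta addr0.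
by apply/eqP; rewrite -oppr_eq0 -mulrN kalpha.
Qed.

Lemma ricci_shift_derivation_gamma_eq0 (k : R) :
  alpha * gamma = 0 -> alpha + delta != 0 -> is_derivation (ricci_mx - k%:M) ->
  gamma = 0.
Proof.
move=> ag0 ad_neq0 dD; have [//|gamma_neq0] := eqVneq gamma 0.
have alpha0 : alpha = 0.
  by move/eqP: ag0; rewrite mulf_eq0 (negbTE gamma_neq0) orbF => /eqP.
have delta_neq0 : delta != 0 by rewrite alpha0 add0r in ad_neq0.
have /rowP Ej := dD (e 1) (e 2); move: (Ej 0) (Ej 1) => {Ej}.
rewrite brk_e12 !brkE !mulmx3E !mxE /= alpha0 => E0 E1.
have k3 : k = 3 / 2 * gamma ^+ 2 by apply: (mulfI gamma_neq0); lra.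
have k1 : k = gamma ^+ 2 / 2 by apply: (mulfI delta_neq0); lra.
have /eqP : gamma ^+ 2 = 0 by lra.
by rewrite expf_eq0 (negbTE gamma_neq0).
Qed.

End G7.

Theorem theorem3p8 (R : realFieldType) (alpha beta gamma delta lambda0 c : R) :
  alpha + delta != 0 -> alpha * gamma = 0 ->
  (algebraic_schouten_soliton alpha beta gamma delta lambda0 c <->
   (gamma = 0 /\ c = 0)).
Proof.
move=> ad_neq0 ag0; split.
- case=> D [dD RicD].
  set k := scal alpha beta gamma delta * lambda0 + c in RicD.
  have DE : D = ricci_mx alpha beta gamma delta - k%:M.
    apply/row_matrixP => i.
    by rewrite !rowE mulmxBr mul_mx_scalar -RicE RicD addrAC subrr add0r.
  have gamma0 : gamma = 0.
    by move: (dD); rewrite DE; apply: ricci_shift_derivation_gamma_eq0.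
  have k0 : k = 0.
    have := derivationB (is_derivation_ricci alpha beta delta gamma0) dD.
    by rewrite DE subKr => /(scalar_derivation_eq0 ad_neq0).
  split=> //; move: k0; rewrite /k scalE gamma0.
  by rewrite expr2 !mul0r add0r.
- case=> gamma0 c0; exists (ricci_mx alpha beta gamma delta); split.
    exact: is_derivation_ricci.
  move=> X; rewrite RicE scalE gamma0 c0.
  by rewrite expr2 !mul0r addr0 scale0r add0r.
Qed.
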